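(* Let $\kappa$ be a cardinal, $C$ the set of elements of $(\mathbb{R}/\mathbb{Z})^{\oplus\kappa}$ of order strictly greater than $2$, $\mu:C\to\kappa$ given by $\mu(x)=\min\{\alpha<\kappa:\pi_\alpha(x)\notin\{0,\tfrac12\}\}$, and $C_1=\{x\in C:\pi_{\mu(x)}(x)=\tfrac14\}$. Then the restriction of $\mu$ to $C_1$ is a rank function on $C_1$ (with $C_1$ carrying the partial operation induced from the group).
   Context: $(\mathbb{R}/\mathbb{Z})^{\oplus\kappa}$ is the additive direct sum of $\kappa$ copies of $\mathbb{R}/\mathbb{Z}$; $\pi_\alpha(x)$ is the $\alpha$-th coordinate of $x$, identified with its representative in $[0,1)$. A subset $X$ carries the induced partial operation: $x+y$ defined iff $x,y,x+y\in X$. For a sequence $\vec{x}=(x_n)_{n\in\omega}$ in $X$ all of whose finite sums $\sum_{i\in a}x_i$ ($a$ finite nonempty subset of $\omega$) lie in $X$, $\mathrm{FS}(\vec{x})$ is the set of these sums and $\mathrm{FS}_1(\vec{x})=\mathrm{FS}((x_{n+1})_n)$; an IP-set of $X$ is a subset containing such an $\mathrm{FS}(\vec{x})$. A rank function on $X$ is a function $\rho$ from $X$ to a well-ordered set such that for every such sequence $\vec{x}$: (1) $\rho$ restricted to $\{x_n:n\in\omega\}$ is finite-to-one; and (2) if $\rho(x_n)\ge\rho(x_0)$ for all $n$, then $x_0+\mathrm{FS}_1(\vec{x})$ is not an IP-set of $X$. *)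

From Stdlib Require Import Reals List Arith.
Open Scope R_scope.

(* A (strict) well-order on an index type: the cardinal kappa is modelled
   by an arbitrary well-ordered index type (I, lt); alpha < kappa ranges over I. *)
Definition is_well_order {I : Type} (lt : I -> I -> Prop) : Prop :=
  (forall a, ~ lt a a) /\
  (forall a b c, lt a b -> lt b c -> lt a c) /\
  (forall a b, lt a b \/ a = b \/ lt b a) /\
  well_founded lt.

(* Elements of (R/Z)^{(+) I}: functions I -> R, each coordinate the
   representative in [0,1), with finite support. *)
Definition elt (I : Type) := I -> R.

Definition in_dsum {I : Type} (x : elt I) : Prop :=
  (forall a, 0 <= x a < 1) /\
  exists l : list I, forall a, ~ In a l -> x a = 0.

Definition zero {I : Type} : elt I := fun _ => 0.

Definition add {I : Type} (x y : elt I) : elt I :=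
  fun a => frac_part (x a + y a).

Definition eqe {I : Type} (x y : elt I) : Prop := forall a, x a = y a.

Definition Cgt2 {I : Type} (x : elt I) : Prop :=
  in_dsum x /\ ~ eqe (add x x) zero.

Definition is_mu {I : Type} (lt : I -> I -> Prop) (x : elt I) (a : I) : Prop :=
  (x a <> 0 /\ x a <> 1/2) /\
  (forall b, lt b a -> x b = 0 \/ x b = 1/2).

Definition Cquarter {I : Type} (mu : elt I -> I) (x : elt I) : Prop :=
  Cgt2 x /\ x (mu x) = 1/4.

(* finite nonempty subsets of omega, as nonempty duplicate-free lists *)
Definition fin_ne (s : list nat) : Prop := s <> nil /\ NoDup s.

Definition sumL {I : Type} (x : nat -> elt I) (s : list nat) : elt I :=
  fold_right (fun n acc => add (x n) acc) zero s.

Definition FS_in {I : Type} (X : elt I -> Prop) (x : nat -> elt I) : Prop :=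
  (forall n, X (x n)) /\ (forall s, fin_ne s -> X (sumL x s)).

Definition IP_set {I : Type} (X : elt I -> Prop) (A : elt I -> Prop) : Prop :=
  exists y : nat -> elt I, FS_in X y /\ (forall s, fin_ne s -> A (sumL y s)).

Definition shiftFS1 {I : Type} (x : nat -> elt I) (z : elt I) : Prop :=
  exists s, fin_ne s /\ eqe z (add (x 0%nat) (sumL (fun n => x (S n)) s)).

Definition rank_function {I : Type} (lt : I -> I -> Prop)
    (X : elt I -> Prop) (rho : elt I -> I) : Prop :=
  forall x : nat -> elt I, FS_in X x ->
    (* (1) rho restricted to {x_n : n in omega} is finite-to-one *)
    (forall a : I, exists N : nat, forall n,
        rho (x n) = a -> exists m, (m < N)%nat /\ eqe (x n) (x m)) /\
    ((forall n, ~ lt (rho (x n)) (rho (x 0%nat))) ->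
       ~ IP_set X (shiftFS1 x)).

From Stdlib Require Import Reals List Arith.
From Stdlib Require Import Lra Lia Classical.
Import ListNotations.

(* Everything happens at a single coordinate [a], where the
   relevant values lie on the quarter grid {0, 1/4, 1/2, 3/4} of R/Z, on which
   addition is addition of numerators mod 4.  The key observation
   ([no_three_quarters]) is that an element of C_1 whose coordinates below [a]
   all lie in {0, 1/2} cannot have coordinate 3/4 at [a]: its rank is either
   below [a] (impossible), equal to [a] (the coordinate is 1/4) or above [a]
   (the coordinate is 0 or 1/2).  Hence no finite sum of an FS-sequence in C_1
   whose terms are "even below [a]" can have numerator 3 at [a].
   (1) Three terms of the same rank [a] would sum to 3/4 at [a]: each fiber of
       the rank has at most two elements, which gives finite-to-one.
   (2) If [a] is the rank of x_0 and is minimal, every later term has 0 or 1/4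
       at [a], and at most one has 1/4; so x_0 + FS_1(x) takes values 1/4 or
       1/2 at [a].  For an FS-sequence y with FS(y) inside it, pair sums force
       every y_i to be 1/4 at [a], and then y_0 + y_1 + y_2 is 3/4 there. *)

Lemma frac_part_shift (q : nat) (t : R) : 0 <= t < 1 -> frac_part (INR q + t) = t.
Proof.
  intros Ht. unfold frac_part, Int_part.
  assert (Hup : up (INR q + t) = (Z.of_nat q + 1)%Z).
  { symmetry; apply tech_up; rewrite plus_IZR, <- INR_IZR_INZ; simpl; lra. }
  rewrite Hup, minus_IZR, plus_IZR, <- INR_IZR_INZ. simpl. lra.
Qed.

Definition qv (k : nat) : R := INR k / 4.

Lemma qv_inj (k k' : nat) : qv k = qv k' -> k = k'.
Proof. unfold qv; intros H. apply INR_eq. lra. Qed.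

Lemma frac_part_qv (k : nat) : frac_part (qv k) = qv (k mod 4).
Proof.
  assert (Hr : 0 <= qv (k mod 4) < 1).
  { unfold qv. pose proof (pos_INR (k mod 4)).
    assert (INR (k mod 4) < INR 4) by (apply lt_INR, Nat.mod_upper_bound; lia).
    simpl in *. lra. }
  replace (qv k) with (INR (k / 4) + qv (k mod 4)).
  - apply frac_part_shift, Hr.
  - unfold qv. rewrite (Nat.div_mod_eq k 4) at 3.
    rewrite plus_INR, mult_INR. simpl. field.
Qed.

Lemma add_qv {I} (x y : elt I) (b : I) (k1 k2 : nat) :
  x b = qv k1 -> y b = qv k2 -> add x y b = qv ((k1 + k2) mod 4).
Proof.
  intros H1 H2. unfold add. rewrite H1, H2, <- frac_part_qv.
  f_equal. unfold qv. rewrite plus_INR. field.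
Qed.

Lemma sumL_qv {I} (x : nat -> elt I) (b : I) (s : list nat) (ks : list nat) :
  Forall2 (fun n k => x n b = qv k) s ks -> sumL x s b = qv (list_sum ks mod 4).
Proof.
  induction 1 as [|n k s ks Hn _ IH]; simpl.
  - unfold zero, qv. simpl. lra.
  - rewrite (add_qv _ _ _ _ _ Hn IH). f_equal.
    apply Nat.Div0.add_mod_idemp_r.
Qed.

Lemma sumL_single {I} (y : nat -> elt I) (i : nat) (b : I) :
  0 <= y i b < 1 -> sumL y [i] b = y i b.
Proof.
  intros H. unfold sumL, add, zero; simpl. rewrite Rplus_0_r.
  rewrite <- (Rplus_0_l (y i b)) at 1. exact (frac_part_shift 0 _ H).
Qed.

Definition Ev {I} (x : elt I) (b : I) : Prop := x b = qv 0 \/ x b = qv 2.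

Lemma Ev_iff {I} (x : elt I) (b : I) : Ev x b <-> x b = 0 \/ x b = 1/2.
Proof. unfold Ev, qv; simpl; split; intros [H|H]; [left|right|left|right]; lra. Qed.

Lemma add_Ev {I} (x y : elt I) (b : I) : Ev x b -> Ev y b -> Ev (add x y) b.
Proof.
  intros [H1|H1] [H2|H2]; pose proof (add_qv _ _ _ _ _ H1 H2) as H;
  simpl in H; unfold Ev; auto.
Qed.

Lemma sumL_Ev {I} (x : nat -> elt I) (b : I) (s : list nat) :
  (forall n, In n s -> Ev (x n) b) -> Ev (sumL x s) b.
Proof.
  induction s as [|n s IH]; intros H; simpl.
  - left. unfold zero, qv; simpl; lra.
  - apply add_Ev; [apply H | apply IH; intros; apply H]; simpl; auto.
Qed.

(** The values 1/4 and 1/2 taken by x_0 + FS_1(x) at the distinguished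
    coordinate; on them, only 1/4 + 1/4 stays in the set. *)

Definition one_or_two (r : R) : Prop := r = qv 1 \/ r = qv 2.

Lemma one_or_two_pair {I} (y : nat -> elt I) (b : I) (i j : nat) :
  one_or_two (y i b) -> one_or_two (y j b) -> one_or_two (sumL y [i; j] b) ->
  y i b = qv 1.
Proof.
  intros [Hi|Hi] [Hj|Hj] Hs; auto;
  rewrite (sumL_qv y b [i; j] [_; _] (Forall2_cons _ _ Hi (Forall2_cons _ _ Hj (Forall2_nil _))))
    in Hs;
  destruct Hs as [Hs|Hs]; apply qv_inj in Hs; discriminate.
Qed.

Lemma fin_ne_single (a : nat) : fin_ne [a].
Proof. split; [discriminate | repeat constructor; simpl; tauto]. Qed.

Lemma fin_ne_pair (a b : nat) : a <> b -> fin_ne [a; b].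
Proof. split; [discriminate | repeat constructor; simpl; intuition]. Qed.

Lemma fin_ne_triple (a b c : nat) : a <> b -> a <> c -> b <> c -> fin_ne [a; b; c].
Proof. split; [discriminate | repeat constructor; simpl; intuition]. Qed.

Section RankFunction.
Variables (I : Type) (lt : I -> I -> Prop) (mu : elt I -> I).
Hypothesis Hwo : is_well_order lt.
Hypothesis Hmu : forall x : elt I, Cgt2 x -> is_mu lt x (mu x).

Lemma lt_trichotomy (a b : I) : lt a b \/ a = b \/ lt b a.
Proof. destruct Hwo as (_ & _ & T & _). apply T. Qed.

Lemma lt_trans (a b c : I) : lt a b -> lt b c -> lt a c.
Proof. destruct Hwo as (_ & T & _). apply T. Qed.

Definition even_below (w : elt I) (a : I) : Prop := forall b, lt b a -> Ev w b.

Lemma at_mu_quarter (w : elt I) : Cquarter mu w -> w (mu w) = qv 1.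
Proof. intros [_ H]. rewrite H. unfold qv; simpl; lra. Qed.

Lemma even_below_of_le (w : elt I) (a : I) :
  Cquarter mu w -> ~ lt (mu w) a -> even_below w a.
Proof.
  intros [HC _] Hle b Hb. apply Ev_iff, (proj2 (Hmu w HC)).
  destruct (lt_trichotomy (mu w) a) as [L|[E|L]].
  - contradiction.
  - subst; exact Hb.
  - exact (lt_trans _ _ _ Hb L).
Qed.

Lemma no_three_quarters (w : elt I) (a : I) :
  Cquarter mu w -> even_below w a -> w a <> qv 3.
Proof.
  intros Hw Hev Ha. destruct Hw as [HC Hq]. destruct (Hmu w HC) as [[N0 N1] Hmin].
  unfold qv in Ha; simpl in Ha.
  destruct (lt_trichotomy (mu w) a) as [L|[E|L]].
  - destruct (proj1 (Ev_iff _ _) (Hev _ L)); contradiction.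
  - subst. lra.
  - destruct (Hmin _ L); lra.
Qed.

Lemma even_below_sumL (x : nat -> elt I) (a : I) (s : list nat) :
  (forall n, In n s -> even_below (x n) a) -> even_below (sumL x s) a.
Proof. intros H b Hb. apply sumL_Ev. intros n Hn. exact (H n Hn b Hb). Qed.

Lemma sum_not_three_quarters (x : nat -> elt I) (a : I) (s ks : list nat) :
  FS_in (Cquarter mu) x -> fin_ne s ->
  (forall n, In n s -> even_below (x n) a) ->
  Forall2 (fun n k => x n a = qv k) s ks ->
  (list_sum ks mod 4 <> 3)%nat.
Proof.
  intros HF Hs Hev Hks E.
  apply (no_three_quarters (sumL x s) a (proj2 HF s Hs) (even_below_sumL x a s Hev)).
  rewrite (sumL_qv x a s ks Hks), E. reflexivity.
Qed.

Lemma fiber_at_most_two (x : nat -> elt I) (a : I) (n1 n2 n3 : nat) :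
  FS_in (Cquarter mu) x -> n1 <> n2 -> n1 <> n3 -> n2 <> n3 ->
  mu (x n1) = a -> mu (x n2) = a -> mu (x n3) = a -> False.
Proof.
  intros HF d12 d13 d23 e1 e2 e3.
  assert (Hq : forall n, mu (x n) = a -> x n a = qv 1).
  { intros n <-. apply at_mu_quarter, (proj1 HF). }
  apply (sum_not_three_quarters x a [n1; n2; n3] [1; 1; 1]%nat HF
           (fin_ne_triple _ _ _ d12 d13 d23)); [| repeat constructor; auto | reflexivity].
  intros n Hn. apply even_below_of_le; [apply (proj1 HF) |].
  destruct Hn as [<-|[<-|[<-|[]]]]; [rewrite e1 | rewrite e2 | rewrite e3];
  destruct Hwo as [irr _]; apply irr.
Qed.

Lemma finite_to_one (x : nat -> elt I) : FS_in (Cquarter mu) x ->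
  forall a : I, exists N : nat, forall n,
    mu (x n) = a -> exists m, (m < N)%nat /\ eqe (x n) (x m).
Proof.
  intros HF a.
  assert (Hrefl : forall n, eqe (x n) (x n)) by (intros n b; reflexivity).
  destruct (classic (exists n, mu (x n) = a)) as [[n1 H1]|Hnone].
  2: { exists 0%nat. intros n Hn. exfalso. eauto. }
  destruct (classic (exists n, n <> n1 /\ mu (x n) = a)) as [[n2 [d H2]]|Hone].
  2: { exists (S n1). intros n Hn. exists n. split; [| apply Hrefl].
       destruct (Nat.eq_dec n n1); [lia | exfalso; eauto]. }
  exists (S (Nat.max n1 n2)). intros n Hn. exists n. split; [| apply Hrefl].
  destruct (Nat.eq_dec n n1); [lia |]. destruct (Nat.eq_dec n n2); [lia |].
  exfalso. apply (fiber_at_most_two x a n1 n2 n); auto.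
Qed.

Section MinimalRank.
Variable x : nat -> elt I.
Hypothesis HF : FS_in (Cquarter mu) x.
Hypothesis Hmin : forall n, ~ lt (mu (x n)) (mu (x 0%nat)).

Let a := mu (x 0%nat).

Lemma terms_even_below (n : nat) : even_below (x n) a.
Proof. apply even_below_of_le; [apply (proj1 HF) | apply Hmin]. Qed.

Lemma first_term_quarter : x 0%nat a = qv 1.
Proof. apply at_mu_quarter, (proj1 HF). Qed.

Lemma later_term_zero_or_quarter (n : nat) :
  n <> 0%nat -> x n a = qv 0 \/ x n a = qv 1.
Proof.
  intros Hn.
  destruct (lt_trichotomy (mu (x n)) a) as [L|[E|L]].
  - exfalso; exact (Hmin n L).
  - right. rewrite <- E. apply at_mu_quarter, (proj1 HF).
  - destruct (even_below_of_le (x n) (mu (x n)) (proj1 HF n)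
                (proj1 Hwo _) a L) as [H|H]; [left; exact H | exfalso].
    apply (sum_not_three_quarters x a [0%nat; n] [1; 2]%nat HF
             (fin_ne_pair _ _ (not_eq_sym Hn))); [| | reflexivity].
    + intros; apply terms_even_below.
    + repeat constructor; [exact first_term_quarter | exact H].
Qed.

Lemma at_most_one_later_quarter (n1 n2 : nat) :
  n1 <> n2 -> n1 <> 0%nat -> n2 <> 0%nat ->
  x n1 a = qv 1 -> x n2 a = qv 1 -> False.
Proof.
  intros d h1 h2 A1 A2.
  apply (sum_not_three_quarters x a [0%nat; n1; n2] [1; 1; 1]%nat HF
           (fin_ne_triple _ _ _ (not_eq_sym h1) (not_eq_sym h2) d)); [| | reflexivity].
  - intros; apply terms_even_below.
  - repeat constructor; auto using first_term_quarter.
Qed.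

Lemma tail_sum_zero_or_quarter (s : list nat) : NoDup s ->
  sumL (fun n => x (S n)) s a = qv 0 \/
  (sumL (fun n => x (S n)) s a = qv 1 /\ exists i, In i s /\ x (S i) a = qv 1).
Proof.
  induction s as [|i s IH]; intros ND.
  - left. simpl. unfold zero, qv; simpl; lra.
  - apply NoDup_cons_iff in ND as [Ni ND]. simpl sumL.
    destruct (later_term_zero_or_quarter (S i) ltac:(discriminate)) as [c|c];
    destruct (IH ND) as [d|[d [i' [Hi' Hx]]]].
    + left. exact (add_qv _ _ _ _ _ c d).
    + right. split; [exact (add_qv _ _ _ _ _ c d) | exists i'; simpl; auto].
    + right. split; [exact (add_qv _ _ _ _ _ c d) | exists i; simpl; auto].
    + exfalso. apply (at_most_one_later_quarter (S i) (S i')); auto.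
      intros E; injection E as ->; contradiction.
Qed.

Lemma shifted_sums_one_or_two (z : elt I) : shiftFS1 x z -> one_or_two (z a).
Proof.
  intros [s [[_ ND] Hz]]. rewrite Hz.
  destruct (tail_sum_zero_or_quarter s ND) as [d|[d _]].
  - left. exact (add_qv _ _ _ _ _ first_term_quarter d).
  - right. exact (add_qv _ _ _ _ _ first_term_quarter d).
Qed.

Lemma shifted_sums_not_IP : ~ IP_set (Cquarter mu) (shiftFS1 x).
Proof.
  intros [y [[HY _] HS]].
  assert (Hsum : forall s, fin_ne s -> one_or_two (sumL y s a))
    by (intros s Hs; exact (shifted_sums_one_or_two _ (HS s Hs))).
  assert (Hterm : forall i, one_or_two (y i a)).
  { intros i. rewrite <- sumL_single; [exact (Hsum _ (fin_ne_single i)) |].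
    destruct (HY i) as [[[Hrange _] _] _]. apply Hrange. }
  assert (Hquarter : forall i j, i <> j -> y i a = qv 1)
    by (intros i j d; apply (one_or_two_pair y a i j); auto using fin_ne_pair).
  assert (Htriple : sumL y [0; 1; 2]%nat a = qv 3).
  { apply (sumL_qv y a _ [1; 1; 1]%nat).
    repeat constructor; [apply (Hquarter _ 1%nat) | apply (Hquarter _ 0%nat)
                        | apply (Hquarter _ 0%nat)]; discriminate. }
  destruct (Hsum _ (fin_ne_triple 0 1 2 ltac:(lia) ltac:(lia) ltac:(lia))) as [E|E];
  rewrite Htriple in E; apply qv_inj in E; discriminate.
Qed.

End MinimalRank.

End RankFunction.

Theorem mainTheorem9 (I : Type) (lt : I -> I -> Prop) (Hwo : is_well_order lt)
  (mu : elt I -> I) (Hmu : forall x : elt I, Cgt2 x -> is_mu lt x (mu x)) :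
  rank_function lt (Cquarter mu) mu.
Proof.
  intros x HF. split.
  - exact (finite_to_one I lt mu Hwo Hmu x HF).
  - intros Hmin. exact (shifted_sums_not_IP I lt mu Hwo Hmu x HF Hmin).
Qed.
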